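(* The unique solution of $\frac{d}{dt}s(t)=H(\pi)s(t)$, $s(0)\in\mathbb V$, is $s(t)=e^{H(\pi)t}s(0)$, and there exist $\delta_2>0$ and $D_4<\infty$ such that for all $s(0)\in\mathbb V$ and $t\ge0$, $\|s(t)\|_2\le D_4e^{-\delta_2t}\|s(0)\|_2$.
   Context: Fix integers $C\ge1$, $d\ge1$ and a real $\sigma>0$. $\mathbb V=\{v\in\mathbb R^{C+1}:v_0=0\}$ with Euclidean norm $\|\cdot\|_2$. $\pi\in\mathbb R^{C+1}$ is the unique vector with $1=\pi_0\ge\pi_1\ge\cdots\ge\pi_C\ge0$ satisfying $\sigma(\pi_{n-1}^d-\pi_n^d)=n(\pi_n-\pi_{n+1})$ for $1\le n\le C$, $\pi_{C+1}=0$. $H(\pi):\mathbb V\to\mathbb V$ is the linear map $(H(\pi)b)_0=0$, $(H(\pi)b)_n=\sigma d\,\pi_{n-1}^{d-1}b_{n-1}-(\sigma d\,\pi_n^{d-1}+n)b_n+nb_{n+1}$ for $1\le n\le C$ (with $b_{C+1}:=0$). *)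

From mathcomp Require Import all_boot all_order all_algebra.
From mathcomp Require Import all_classical all_reals all_analysis.
Set Implicit Arguments. Unset Strict Implicit. Unset Printing Implicit Defensive.
Import Order.TTheory GRing.Theory Num.Theory numFieldNormedType.Exports.
Local Open Scope classical_set_scope.
Local Open Scope ring_scope.

Section Defs.
Variable R : realType.

(* The space V = {v in R^{C+1} : v_0 = 0} is identified with column vectors
   'cV[R]_C: index i : 'I_C stands for the coordinate n = i+1. *)

Definition enorm (C : nat) (v : 'cV[R]_C) : R :=
  Num.sqrt (\sum_(i < C) (v i 0) ^+ 2).

(* The matrix of H(pi) in the coordinates n = 1..C (b_0 = 0, b_{C+1} = 0). *)
Definition Hmat (C d : nat) (sigma : R) (pi : nat -> R) : 'M[R]_C :=
  \matrix_(i < C, j < C)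
    let n := i.+1 in let m := j.+1 in
    if m.+1 == n then sigma * d%:R * pi n.-1 ^+ d.-1
    else if m == n then - (sigma * d%:R * pi n ^+ d.-1 + n%:R)
    else if m == n.+1 then n%:R
    else 0.

Definition expmx (C : nat) (A : 'M[R]_C) : 'M[R]_C :=
  \matrix_(i < C, j < C)
    limn (@series R (fun k : nat => (A ^+ k) i j / (k`!)%:R)).

Definition is_solution (C : nat) (H : 'M[R]_C) (s0 : 'cV[R]_C)
  (s : R -> 'cV[R]_C) : Prop :=
  s 0 = s0 /\
  (forall i : 'I_C, {within [set t : R | 0 <= t], continuous (fun t => s t i 0)}) /\
  (forall t : R, 0 < t -> forall i : 'I_C,
      is_derive t 1 (fun u => s u i 0) ((H *m s t) i 0)).

End Defs.

From mathcomp Require Import all_boot all_order all_algebra.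
From mathcomp Require Import all_classical all_reals all_analysis.
From mathcomp Require Import ring lra.
Import Order.TTheory GRing.Theory Num.Theory numFieldNormedType.Exports.
Local Open Scope classical_set_scope.
Local Open Scope ring_scope.
Set Implicit Arguments. Unset Strict Implicit. Unset Printing Implicit Defensive.

(* The matrix H = H(pi) of the linearised dynamics is a Metzler matrix
   (nonnegative off-diagonal entries) whose column sums are at most -1; the
   theorem follows from general facts about e^{tA} for square real matrices.

   1. Existence.  The entries of e^{tA} are power series in t whose
      coefficients (A^k)_ij / k! are dominated by |A|_1^k / k!, |A|_1 being the
      entrywise l1 norm; differentiating termwise, t |-> e^{tA} s0 solves
      s' = A s, s(0) = s0.
   2. Uniqueness.  If w' = A w and w(0) = 0, then e^{-2|A|_1 t} |w(t)|^2 is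
      nonincreasing because <w, A w> <= |A|_1 |w|^2, so w = 0.
   3. Decay.  A Metzler matrix with column sums <= -delta is N - cI with
      N >= 0 of column sums <= c - delta; by uniqueness e^{tA} = e^{-ct} e^{tN},
      and e^{tN} >= 0 has column sums <= e^{(c - delta) t}, so e^{tA} contracts
      the l1 norm by e^{-delta t}.  Comparing the l1 and Euclidean norms gives
      the bound with delta2 = 1 and D4 = C.
   4. The Metzler property and the column sums of H(pi) only use pi_n >= 0,
      which follows from the monotonicity of pi and pi_C >= 0. *)

Lemma limn_sum {R : realType} (I : finType) (u : I -> nat -> R) :
  (forall l, cvgn (u l)) ->
  cvgn (fun N => \sum_l u l N) /\ limn (fun N => \sum_l u l N) = \sum_l limn (u l).
Proof.
move=> cu.
have cv : (fun N => \sum_l u l N) @ \oo --> \sum_l limn (u l).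
  by apply: (cvg_big add_continuous) => // l _; exact: cu.
by split; [apply/cvg_ex; exists (\sum_l limn (u l)) | exact: cvg_lim].
Qed.

Section MatrixExponential.
Variables (R : realType) (n : nat).
Implicit Types A : 'M[R]_n.

Definition mxnorm1 A : R := \sum_i \sum_j `|A i j|.

Lemma mxnorm1_ge0 A : 0 <= mxnorm1 A.
Proof. by apply: sumr_ge0 => i _; apply: sumr_ge0. Qed.

Lemma row_le_mxnorm1 A i : \sum_j `|A i j| <= mxnorm1 A.
Proof.
by rewrite /mxnorm1 [leRHS](bigD1 i) //= lerDl; apply: sumr_ge0 => *; apply: sumr_ge0.
Qed.

Lemma entry_le_mxnorm1 A i j : `|A i j| <= mxnorm1 A.
Proof.
by apply: le_trans (row_le_mxnorm1 A i); rewrite (bigD1 j) //= lerDl sumr_ge0.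
Qed.

Lemma exprmx_entry_le A k i j : `|(A ^+ k) i j| <= mxnorm1 A ^+ k.
Proof.
elim: k i j => [|k IH] i j.
  by rewrite expr0 mxE; case: (i == j); rewrite ?normr1 ?normr0.
rewrite exprS mxE (le_trans (ler_norm_sum _ _ _)) //.
apply: (@le_trans _ _ (\sum_l `|A i l| * mxnorm1 A ^+ k)).
  by apply: ler_sum => l _; rewrite normrM ler_wpM2l.
by rewrite -mulr_suml exprS ler_wpM2r ?exprn_ge0 ?mxnorm1_ge0 ?row_le_mxnorm1.
Qed.

(* The Taylor coefficients in t of the (i, j) entry of A ^ p e^{tA}. *)
Definition expcoef A (p : nat) i j (k : nat) : R := (A ^+ (k + p)) i j / k`!%:R.

(* These power series converge everywhere, by comparison with the exponential
   series of |A|_1 |x|. *)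
Lemma expcoef_cvg A p i j (x : R) : cvgn (pseries (expcoef A p i j) x).
Proof.
apply: normed_cvg.
apply: (@series_le_cvg _ _ (fun k => mxnorm1 A ^+ p * exp_coeff (mxnorm1 A * `|x|) k)).
- by move=> k; rewrite normr_ge0.
- move=> k; rewrite mulr_ge0 ?exprn_ge0 ?mxnorm1_ge0 //.
  by rewrite exp_coeff_ge0 // mulr_ge0 ?mxnorm1_ge0.
- move=> k /=; rewrite /expcoef /exp_coeff /= !normrM normfV normr_nat normrX.
  rewrite [leRHS](_ : _ = mxnorm1 A ^+ (k + p) / k`!%:R * `|x| ^+ k); last first.
    by rewrite exprMn exprD; ring.
  by rewrite ler_wpM2r ?exprn_ge0 // ler_wpM2r ?invr_ge0 // exprmx_entry_le.
- exact/is_cvg_seriesZ/is_cvg_series_exp_coeff.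
Qed.

Lemma pseries_diffs_expcoef A p i j :
  pseries_diffs (expcoef A p i j) = expcoef A p.+1 i j.
Proof.
apply/funext => k; rewrite /pseries_diffs /expcoef factS natrM invfM addSnnS.
have k1_neq0 : (k.+1%:R : R) != 0 by rewrite pnatr_eq0.
by rewrite mulrCA; congr (_ * _); rewrite mulrA mulfV // mul1r.
Qed.

Lemma exprZ_entry A (t : R) k i j : ((t *: A) ^+ k) i j = t ^+ k * (A ^+ k) i j.
Proof.
elim: k i j => [|k IH] i j; first by rewrite !expr0 mul1r.
rewrite !exprS !mxE mulr_sumr; apply: eq_bigr => l _.
by rewrite IH !mxE; ring.
Qed.

Definition expent A i j (t : R) : R := limn (pseries (expcoef A 0 i j) t).

Lemma expmx_scaleE A (t : R) i j : expmx (t *: A) i j = expent A i j t.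
Proof.
rewrite mxE /expent; congr (lim (_ @ \oo)); apply/funext => N.
rewrite /pseries /series /=; apply: eq_bigr => k _.
by rewrite exprZ_entry /expcoef addn0; ring.
Qed.

Lemma expent_derive A i j (t : R) :
  is_derive t 1 (expent A i j) (limn (pseries (expcoef A 1 i j) t)).
Proof.
rewrite /expent -pseries_diffs_expcoef.
apply: (@pseries_snd_diffs _ _ (`|t| + 1)); rewrite ?pseries_diffs_expcoef.
1-3: exact: expcoef_cvg.
by rewrite [ltRHS]ger0_norm ?addr_ge0 // ltrDl.
Qed.

Lemma pseries_expcoef1 A i j (t : R) :
  limn (pseries (expcoef A 1 i j) t) = \sum_l A i l * expent A l j t.
Proof.
have -> : pseries (expcoef A 1 i j) t =
    (fun N => \sum_l A i l * pseries (expcoef A 0 l j) t N).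
  apply/funext => N; rewrite /pseries /series /=.
  under [RHS]eq_bigr do rewrite mulr_sumr.
  rewrite exchange_big /=; apply: eq_bigr => k _.
  rewrite /expcoef addn1 addn0 exprS mxE !mulr_suml; apply: eq_bigr => l _.
  by ring.
have cv : forall l, cvgn (fun N => A i l * pseries (expcoef A 0 l j) t N).
  by move=> l; apply: is_cvgMl_tmp; exact: expcoef_cvg.
rewrite (limn_sum cv).2; apply: eq_bigr => l _.
by rewrite limM //; [rewrite lim_cst | exact: is_cvg_cst | exact: expcoef_cvg].
Qed.

Lemma expmx0 A : expmx (0 *: A) = 1%:M.
Proof.
apply/matrixP => i j; rewrite expmx_scaleE /expent.
apply: lim_near_cst => //; near=> N.
have N_gt0 : (0 < N)%N by near: N; exists 1%N.
rewrite /pseries /series /= -(prednK N_gt0) big_nat_recl //= big1 ?addr0.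
  by rewrite expr0 mulr1 /expcoef expr0 fact0 divr1.
by move=> k _; rewrite expr0n mulr0.
Unshelve. all: by end_near. Qed.

Lemma expmx_derive A (s0 : 'cV[R]_n) i (t : R) :
  is_derive t 1 (fun u => (expmx (u *: A) *m s0) i 0)
    ((A *m (expmx (t *: A) *m s0)) i 0).
Proof.
have -> : (fun u => (expmx (u *: A) *m s0) i 0) = \sum_j s0 j 0 \*: expent A i j.
  apply/funext => u; rewrite fct_sumE mxE; apply: eq_bigr => j _.
  by rewrite expmx_scaleE mulrC.
apply: is_derive_eq; first exact: is_derive_sum (fun j =>
  is_deriveZ (s0 j 0) (expent_derive A i j t)).
rewrite mulmxA mxE; apply: eq_bigr => j _.
rewrite pseries_expcoef1 !mxE mulrC; congr (_ * _); apply: eq_bigr => l _.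
by rewrite expmx_scaleE.
Qed.

Lemma expmx_solution A (s0 : 'cV[R]_n) : is_solution A s0 (fun t => expmx (t *: A) *m s0).
Proof.
split; first by rewrite expmx0 mul1mx.
split => [i | t _ i]; last exact: expmx_derive.
apply: continuous_subspaceT => x.
apply/differentiable_continuous/derivable1_diffP.
exact: (@ex_derive _ _ _ _ _ _ _ (expmx_derive A s0 i x)).
Qed.

End MatrixExponential.

Lemma is_derive_expR_scale {R : realType} (c u : R) :
  is_derive u 1 (fun v => expR (c * v)) (c * expR (c * u)).
Proof.
have D : is_derive u (1 : R) (expR \o (c \*: id)) (expR ((c \*: id) u) * (c *: 1)).
  exact: is_derive1_comp.
by apply: (is_derive_eq D); rewrite /GRing.scale /= mulr1 mulrC.
Qed.

Lemma continuous_expR_scale {R : realType} (c : R) : continuous (fun v => expR (c * v)).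
Proof.
move=> u; apply/differentiable_continuous/derivable1_diffP.
exact: (@ex_derive _ _ _ _ _ _ _ (is_derive_expR_scale c u)).
Qed.

Section Uniqueness.
Variables (R : realType) (n : nat).
Implicit Types (A : 'M[R]_n) (x : 'cV[R]_n).

Definition sqnorm x : R := \sum_i x i 0 ^+ 2.

Lemma coord_sq_le_sqnorm x i : x i 0 ^+ 2 <= sqnorm x.
Proof. by rewrite /sqnorm (bigD1 i) //= lerDl sumr_ge0 // => k _; rewrite sqr_ge0. Qed.

Lemma sqnorm_eq0 x : sqnorm x = 0 -> x = 0.
Proof.
move=> x0; apply/matrixP => i j; rewrite (ord1 j) mxE; apply/eqP.
by rewrite -sqrf_eq0 eq_le sqr_ge0 -x0 coord_sq_le_sqnorm.
Qed.

(* <x, Ax> <= |A|_1 |x|^2: the only property of A used for uniqueness. *)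
Lemma dot_mulmx_le A x :
  \sum_i x i 0 * (A *m x) i 0 <= mxnorm1 A * sqnorm x.
Proof.
rewrite /mxnorm1 mulr_suml; apply: ler_sum => i _.
rewrite mxE mulr_sumr mulr_suml; apply: ler_sum => l _.
apply: (le_trans (ler_norm _)); rewrite mulrCA normrM ler_wpM2l //.
have hi := coord_sq_le_sqnorm x i; have hl := coord_sq_le_sqnorm x l.
rewrite normrM; have := sqr_ge0 (`|x i 0| - `|x l 0|).
by rewrite -(real_normK (num_real (x i 0))) -(real_normK (num_real (x l 0))) in hi hl; nra.
Qed.

Lemma sqnorm_solution_derive A w0 w (t : R) : is_solution A w0 w -> 0 < t ->
  is_derive t 1 (fun u => sqnorm (w u)) (2 * \sum_i w t i 0 * (A *m w t) i 0).
Proof.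
move=> [_ [_ dw]] t_gt0.
pose f i u := w u i 0.
have -> : (fun u => sqnorm (w u)) = \sum_i (f i * f i).
  by apply/funext => u; rewrite fct_sumE; apply: eq_bigr => i _; rewrite expr2.
apply: is_derive_eq; first exact: is_derive_sum (fun i => is_deriveM (dw t t_gt0 i) (dw t t_gt0 i)).
by rewrite mulr_sumr; apply: eq_bigr => i _; rewrite /GRing.scale /=; ring.
Qed.

Lemma energy_nonincreasing A w0 w : is_solution A w0 w ->
  forall s t : R, 0 <= s -> s <= t ->
  expR (- (2 * mxnorm1 A) * t) * sqnorm (w t) <=
  expR (- (2 * mxnorm1 A) * s) * sqnorm (w s).
Proof.
move=> sol; have [_ [cw _]] := sol.
set c := - (2 * mxnorm1 A).
have D (u : R) : 0 < u -> is_derive u 1 (fun v => expR (c * v) * sqnorm (w v))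
    (expR (c * u) *: (2 * \sum_i w u i 0 * (A *m w u) i 0) +
     sqnorm (w u) *: (c * expR (c * u))).
  by move=> u_gt0; exact: is_deriveM (is_derive_expR_scale c u)
    (sqnorm_solution_derive sol u_gt0).
apply: (@ler0_derive1_nincry _ ((fun v => expR (c * v)) \* (fun v => sqnorm (w v))))
  => [u | u | ].
- by rewrite in_itv /= andbT => /D Du; exact: (@ex_derive _ _ _ _ _ _ _ Du).
- rewrite in_itv /= andbT => /D Du; rewrite derive1E (@derive_val _ _ _ _ _ _ _ Du).
  have := dot_mulmx_le A (w u); have := expR_gt0 (c * u).
  by rewrite /GRing.scale /= /c; nra.
- rewrite set_itvcy => u.
  apply: continuousM.
    by apply: continuous_subspaceT; exact: continuous_expR_scale.
  apply: (continuous_big add_continuous) => i _ {}u.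
  have -> : (fun v => w v i 0 ^+ 2) = (fun v => w v i 0) \* (fun v => w v i 0).
    by apply/funext => v; rewrite /= expr2.
  by apply: cvgM; exact: cw.
Qed.

Lemma solution_from0 A w : is_solution A 0 w -> forall t : R, 0 <= t -> w t = 0.
Proof.
move=> sol t t_ge0; have [w0 _] := sol.
have := energy_nonincreasing sol (lexx 0) t_ge0.
have -> : sqnorm (w 0) = 0 by rewrite w0 /sqnorm big1 // => i _; rewrite mxE expr0n.
rewrite mulr0 => Et; apply: sqnorm_eq0; apply/eqP.
rewrite eq_le -(pmulr_rle0 _ (expR_gt0 (- (2 * mxnorm1 A) * t))) Et /=.
by rewrite sumr_ge0 // => i _; rewrite sqr_ge0.
Qed.

(* Uniqueness: every solution of s' = A s, s(0) = s0 equals e^{tA} s0 on [0, +oo),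
   since the difference of two solutions is a solution starting at 0. *)
Lemma solution_unique A (s0 : 'cV[R]_n) (s : R -> 'cV[R]_n) :
  is_solution A s0 s -> forall t : R, 0 <= t -> s t = expmx (t *: A) *m s0.
Proof.
move=> [s_0 [cs ds]] t t_ge0.
have [e_0 [ce de]] := expmx_solution A s0.
suff /solution_from0/(_ t t_ge0)/eqP : is_solution A 0 (fun u => s u - expmx (u *: A) *m s0).
  by rewrite subr_eq0 => /eqP.
have fE i : (fun u => (s u - expmx (u *: A) *m s0) i 0) =
    (fun u => s u i 0) - (fun u => (expmx (u *: A) *m s0) i 0).
  by rewrite funeqE => u; rewrite [LHS]mxE [X in _ + X]mxE !fctE.
split; first by rewrite s_0 e_0 subrr.
split => [i u | u u_gt0 i]; rewrite fE.
  exact: continuousB (cs i u) (ce i u).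
apply: is_derive_eq; first exact: is_deriveB (ds u u_gt0 i) (de u u_gt0 i).
by rewrite mulmxBr !mxE.
Qed.

End Uniqueness.

Section MetzlerDecay.
Variables (R : realType) (n : nat).
Implicit Types (A N : 'M[R]_n) (x : 'cV[R]_n).

Definition vnorm1 x : R := \sum_i `|x i 0|.

Lemma vnorm1Z (a : R) x : vnorm1 (a *: x) = `|a| * vnorm1 x.
Proof. by rewrite /vnorm1 mulr_sumr; apply: eq_bigr => i _; rewrite mxE normrM. Qed.

(* Scalar shift: e^{t(N - cI)} s0 = e^{-ct} e^{tN} s0, by uniqueness of
   solutions. *)
Lemma expmx_shift N (c : R) (s0 : 'cV[R]_n) (t : R) : 0 <= t ->
  expmx (t *: (N - c%:M)) *m s0 = expR (- (c * t)) *: (expmx (t *: N) *m s0).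
Proof.
move=> t_ge0.
suff sol : is_solution (N - c%:M) s0 (fun u => expR (- (c * u)) *: (expmx (u *: N) *m s0)).
  by rewrite -(solution_unique sol t_ge0).
have fE i : (fun u => (expR (- (c * u)) *: (expmx (u *: N) *m s0)) i 0) =
    (fun u => expR (- c * u)) * (fun u => (expmx (u *: N) *m s0) i 0).
  by apply/funext => u; rewrite mxE mulrfctE mulNr.
have De u i := is_deriveM (is_derive_expR_scale (- c) u) (expmx_derive N s0 i u).
split; first by rewrite mulr0 oppr0 expR0 scale1r expmx0 mul1mx.
split => [i | u _ i]; rewrite fE.
  apply: continuous_subspaceT => u; apply/differentiable_continuous/derivable1_diffP.
  exact: (@ex_derive _ _ _ _ _ _ _ (De u i)).
apply: (is_derive_eq (De u i)).
by rewrite mulmxBl mul_scalar_mx -scalemxAr !mxE /GRing.scale /= mulNr; ring.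
Qed.

Section NonnegativeMatrix.
Variables (N : 'M[R]_n) (b : R).
Hypothesis N_ge0 : forall i j, 0 <= N i j.
Hypothesis b_ge0 : 0 <= b.
Hypothesis colsumN : forall j, \sum_i N i j <= b.

Lemma exprmx_ge0 k i j : 0 <= (N ^+ k) i j.
Proof.
elim: k i j => [|k IH] i j; first by rewrite expr0 mxE; case: (i == j).
by rewrite exprS mxE; apply: sumr_ge0 => l _; exact: mulr_ge0.
Qed.

(* Column sums are submultiplicative, so those of N ^ k are at most b ^ k. *)
Lemma colsum_exprmx k j : \sum_i (N ^+ k) i j <= b ^+ k.
Proof.
elim: k j => [|k IH] j.
  rewrite expr0 (bigD1 j) //= mxE eqxx big1 ?addr0 // => i /negbTE ij.
  by rewrite mxE ij.
rewrite exprSr; under eq_bigr do rewrite mxE.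
rewrite exchange_big /=.
apply: (@le_trans _ _ (\sum_l b ^+ k * N l j)).
  by apply: ler_sum => l _; rewrite -mulr_suml ler_wpM2r.
by rewrite -mulr_sumr exprSr ler_wpM2l ?exprn_ge0.
Qed.

Lemma expmx_ge0 (t : R) i j : 0 <= t -> 0 <= expmx (t *: N) i j.
Proof.
move=> t_ge0; rewrite expmx_scaleE; apply: limr_ge; first exact: expcoef_cvg.
near=> M; apply: sumr_ge0 => k _.
by rewrite mulr_ge0 ?exprn_ge0 // divr_ge0 // exprmx_ge0.
Unshelve. all: by end_near. Qed.

Lemma colsum_expmx (t : R) j : 0 <= t -> \sum_i expmx (t *: N) i j <= expR (b * t).
Proof.
move=> t_ge0; under eq_bigr do rewrite expmx_scaleE.
have cv i : cvgn (pseries (expcoef N 0 i j) t) by exact: expcoef_cvg.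
rewrite -(limn_sum cv).2 /expR.
apply: ler_lim; [exact: (limn_sum cv).1 | exact: is_cvg_series_exp_coeff | ].
near=> M; rewrite /pseries /series /= exchange_big /=.
apply: ler_sum => k _; rewrite /expcoef -!mulr_suml /exp_coeff /=.
rewrite exprMn mulrAC ler_wpM2r ?invr_ge0 // ler_wpM2r ?exprn_ge0 //.
by under eq_bigr do rewrite addn0; exact: colsum_exprmx.
Unshelve. all: by end_near. Qed.

Lemma vnorm1_expmx_le (t : R) x : 0 <= t ->
  vnorm1 (expmx (t *: N) *m x) <= expR (b * t) * vnorm1 x.
Proof.
move=> t_ge0; apply: (@le_trans _ _ (\sum_i \sum_j expmx (t *: N) i j * `|x j 0|)).
  apply: ler_sum => i _; rewrite mxE (le_trans (ler_norm_sum _ _ _)) //.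
  by apply: ler_sum => j _; rewrite normrM ger0_norm ?expmx_ge0.
rewrite exchange_big /= /vnorm1 mulr_sumr; apply: ler_sum => j _.
by rewrite -mulr_suml ler_wpM2r ?colsum_expmx.
Qed.

End NonnegativeMatrix.

(* Write A = N - cI with c = |A|_1 + delta, N >= 0. *)
Lemma metzler_decay A (delta : R) : 0 <= delta ->
  (forall i j, i != j -> 0 <= A i j) -> (forall j, \sum_i A i j <= - delta) ->
  forall x (t : R), 0 <= t ->
  vnorm1 (expmx (t *: A) *m x) <= expR (- (delta * t)) * vnorm1 x.
Proof.
move=> delta_ge0 offdiag colsumA x t t_ge0.
set c := mxnorm1 A + delta; set N := A + c%:M.
have AE : A = N - c%:M by rewrite /N addrK.
have N_ge0 i j : 0 <= N i j.
  rewrite /N !mxE; have [<- | ij] := eqVneq i j; last by rewrite mulr0n addr0 offdiag.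
  have := entry_le_mxnorm1 A i i; rewrite mulr1n ler_norml => /andP[Aii _].
  by rewrite /c; lra.
have colsumN j : \sum_i N i j <= mxnorm1 A.
  rewrite /N; under eq_bigr do rewrite !mxE.
  rewrite big_split /= [X in _ + X](bigD1 j) //= eqxx mulr1n.
  rewrite [\sum_(i < n | i != j) _]big1 => [|i /negbTE -> //].
  by have := colsumA j; rewrite /c addr0; lra.
rewrite AE expmx_shift // vnorm1Z ger0_norm ?expR_ge0 //.
have := vnorm1_expmx_le N_ge0 (mxnorm1_ge0 A) colsumN x t_ge0.
move/(ler_wpM2l (expR_ge0 (- (c * t))))/le_trans; apply.
by rewrite mulrA -expRD [X in expR X](_ : _ = - (delta * t)) // /c; ring.
Qed.

Lemma enorm_le_vnorm1 x : enorm x <= vnorm1 x.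
Proof.
have h0 : 0 <= vnorm1 x by apply: sumr_ge0.
rewrite /enorm -(ger0_norm h0) -sqrtr_sqr ler_sqrt ?sqr_ge0 //.
rewrite expr2 mulr_suml; apply: ler_sum => i _.
rewrite -(real_normK (num_real (x i 0))) expr2 ler_wpM2l //.
by rewrite /vnorm1 (bigD1 i) //= lerDl sumr_ge0.
Qed.

Lemma vnorm1_le_enorm x : vnorm1 x <= n%:R * enorm x.
Proof.
apply: (@le_trans _ _ (\sum_(i < n) enorm x)); last by rewrite sumr_const card_ord mulr_natl.
apply: ler_sum => i _; rewrite /enorm -sqrtr_sqr ler_sqrt ?sumr_ge0 // => [|k _]; last exact: sqr_ge0.
by rewrite (bigD1 i) //= lerDl sumr_ge0 // => k _; rewrite sqr_ge0.
Qed.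

End MetzlerDecay.

Lemma nonincreasing_ge0 {R : realType} (f : nat -> R) (C : nat) :
  (forall k, (k < C)%N -> f k.+1 <= f k) -> 0 <= f C ->
  forall k, (k <= C)%N -> 0 <= f k.
Proof.
move=> mono fC_ge0 k kC; apply: le_trans fC_ge0 _.
suff le_shift m : (m + k <= C)%N -> f (m + k) <= f k.
  by rewrite -(subnK kC); apply: le_shift; rewrite subnK.
elim: m => [|m IH] mk //.
exact: le_trans (mono _ mk) (IH (ltnW mk)).
Qed.

Section BirthDeathGenerator.
Variables (R : realType) (C d : nat) (sigma : R) (pi : nat -> R).
Hypothesis sigma_ge0 : 0 <= sigma.
Hypothesis pi_ge0 : forall k, (k <= C)%N -> 0 <= pi k.

Let H := Hmat C d sigma pi.

(* The rate sigma d pi_m^{d-1} leaving state m = j + 1 upwards. *)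
Let up (j : 'I_C) : R := sigma * d%:R * pi j.+1 ^+ d.-1.

Lemma up_ge0 j : 0 <= up j.
Proof. by rewrite /up !mulr_ge0 ?exprn_ge0 ?pi_ge0. Qed.

Lemma Hmat_diag j : H j j = - (up j + j.+1%:R).
Proof. by rewrite mxE /= eqxx (gtn_eqF (ltnSn j.+1)). Qed.

Lemma Hmat_offdiag i j : i != j ->
  H i j = ((i : nat) == j.+1)%:R * up j + (i.+1 == (j : nat))%:R * j%:R.
Proof.
move=> ij; rewrite mxE /= !eqSS.
have -> : ((j : nat) == i) = false by rewrite eq_sym; exact: negbTE ij.
rewrite [_ == (i : nat)]eq_sym [_ == i.+1]eq_sym.
have [ij1 | _] := eqVneq (i : nat) j.+1.
  by rewrite ij1 (gtn_eqF (leqnSn j.+1)) mul1r mul0r addr0.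
by have [-> | _] := eqVneq i.+1 (j : nat); rewrite mul0r add0r ?mul1r ?mul0r.
Qed.

Lemma Hmat_offdiag_ge0 i j : i != j -> 0 <= H i j.
Proof.
by move=> ij; rewrite Hmat_offdiag // addr_ge0 // mulr_ge0 // up_ge0.
Qed.

Lemma sum_indicator_le1 (m : nat) (P : pred 'I_m) :
  (forall i1 i2, P i1 -> P i2 -> i1 = i2) -> \sum_(i < m) ((P i)%:R : R) <= 1.
Proof.
move=> P_uniq; have [i0 Pi0 | noP] := pickP P; last by rewrite big1 // => i; rewrite noP.
rewrite (bigD1 i0) //= Pi0 big1 ?addr0 // => i ii0.
by case: (boolP (P i)) => // Pi; rewrite (P_uniq _ _ Pi Pi0) eqxx in ii0.
Qed.

(* Every column of H sums to at most -1: the diagonal entry -(up + m) loses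
   at least as much as the two neighbours up and m - 1 receive. *)
Lemma Hmat_colsum j : \sum_i H i j <= -1.
Proof.
rewrite (bigD1 j) //= Hmat_diag.
under eq_bigr => i ij do rewrite Hmat_offdiag //.
set F := fun i : 'I_C => ((i : nat) == j.+1)%:R * up j + (i.+1 == (j : nat))%:R * j%:R.
have F_ge0 i : 0 <= F i by rewrite addr_ge0 // mulr_ge0 // up_ge0.
have le_up : \sum_(i < C) (((i : nat) == j.+1)%:R : R) <= 1.
  by apply: sum_indicator_le1 => i1 i2 /eqP e1 /eqP e2; apply: val_inj; rewrite /= e1 e2.
have le_down : \sum_(i < C) ((i.+1 == (j : nat))%:R : R) <= 1.
  by apply: sum_indicator_le1 => i1 i2 /eqP e1 /eqP e2; apply/val_inj/succn_inj; rewrite e1 e2.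
have offdiag_le : \sum_(i | i != j) F i <= up j + j%:R.
  rewrite (le_trans (_ : _ <= \sum_i F i)) //; first by rewrite [leRHS](bigD1 j) //= lerDr.
  rewrite big_split /= -!mulr_suml lerD //.
    by rewrite -[leRHS]mul1r ler_wpM2r ?up_ge0.
  by rewrite -[leRHS]mul1r ler_wpM2r.
by rewrite -natr1; lra.
Qed.

End BirthDeathGenerator.

Theorem mainTheorem7 (R : realType) (C d : nat) (sigma : R) (pi : nat -> R)
  (hC : (1 <= C)%N) (hd : (1 <= d)%N) (hsigma : 0 < sigma)
  (hpi0 : pi 0%N = 1)
  (hpimono : forall n : nat, (n < C)%N -> pi n.+1 <= pi n)
  (hpiC : 0 <= pi C)
  (hpiC1 : pi C.+1 = 0)
  (hpirec : forall n : nat, (1 <= n <= C)%N ->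
     sigma * (pi n.-1 ^+ d - pi n ^+ d) = n%:R * (pi n - pi n.+1)) :
  let H := Hmat C d sigma pi in
  (forall s0 : 'cV[R]_C,
     is_solution H s0 (fun t => expmx (t *: H) *m s0) /\
     (forall s : R -> 'cV[R]_C, is_solution H s0 s ->
        forall t : R, 0 <= t -> s t = expmx (t *: H) *m s0)) /\
  (exists delta2 D4 : R, 0 < delta2 /\
     forall (s0 : 'cV[R]_C) (t : R), 0 <= t ->
       enorm (expmx (t *: H) *m s0) <= D4 * expR (- (delta2 * t)) * enorm s0).
Proof.
move=> H; split=> [s0 | ].
  by split=> [|s]; [exact: expmx_solution | exact: solution_unique].
have sigma_ge0 := ltW hsigma.
have pi_ge0 := nonincreasing_ge0 hpimono hpiC.
exists 1, C%:R; split=> // s0 t t_ge0.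
have decay := metzler_decay ler01 (Hmat_offdiag_ge0 d sigma_ge0 pi_ge0)
  (Hmat_colsum d sigma_ge0 pi_ge0) s0 t_ge0.
apply: le_trans (enorm_le_vnorm1 _) (le_trans decay _).
by rewrite mulrAC [leRHS]mulrC ler_wpM2l ?expR_ge0 ?vnorm1_le_enorm.
Qed.
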